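(* Let $n\ge 2$, $V_n=[n]$, and let $K_n=(V_n,E_n)$ be the complete graph. Let $1\le k\le\lfloor n/2\rfloor$. Then there exists a family $T_k$ of $k$-element subsets of $V_n$ with \[|T_k|\le (1+k\ln(n))\,2^{-k}\binom{n}{k}\] such that for every matching $M\subset E_n$ with $|M|=k$ there exists $X\in T_k$ with $\delta(X)\cap M=M$, i.e. $M\subset E(X,V_n\setminus X)$ (every edge of $M$ has exactly one endpoint in $X$).
   Context: For $X\subset V_n$, $\delta(X)$ denotes the set of edges with exactly one endpoint in $X$, and $E(X,V_n\setminus X)$ the set of edges joining $X$ to its complement. A matching is a set of pairwise disjoint edges. *)

From mathcomp Require Import all_boot.
From Stdlib Require Import Reals.
Set Implicit Arguments. Unset Strict Implicit. Unset Printing Implicit Defensive.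

Definition is_edge (n : nat) (e : {set 'I_n}) : bool := #|e| == 2.

Definition is_matching (n : nat) (M : {set {set 'I_n}}) : bool :=
  [forall e in M, is_edge e] &&
  [forall e in M, forall f in M, (e != f) ==> [disjoint e & f]].

Definition delta (n : nat) (X : {set 'I_n}) : {set {set 'I_n}} :=
  [set e : {set 'I_n} | is_edge e && (#|e :&: X| == 1)].

(* Call X a cut set of a matching M when every edge of M has exactly one endpoint
   in X.  A k-matching has 2^k cut sets of size k (one endpoint per edge), and a
   k-set X is a cut set of at most n^k matchings (such a matching is determined by
   the partners of the vertices of X), so double counting bounds the number N of
   k-matchings by C(n,k) n^k / 2^k.  Keep each k-set independently with
   probability p = min(1, k ln n / 2^k) and add one cut set for every k-matching
   left uncovered: the expected size is at most
   p C(n,k) + N (1-p)^(2^k) <= p C(n,k) + N n^-k <= (1 + k ln n) 2^-k C(n,k). *)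

From Stdlib Require Import Reals Lra.
From mathcomp Require Import all_boot all_order all_algebra Rstruct.
Set Implicit Arguments. Unset Strict Implicit. Unset Printing Implicit Defensive.
Import Order.POrderTheory GRing.Theory Num.Theory.

Section Matchings.

Variable n : nat.
Implicit Types (x : 'I_n) (X e : {set 'I_n}) (M : {set {set 'I_n}}).

Lemma matching_edge M e : is_matching M -> e \in M -> #|e| = 2.
Proof. by case/andP=> /forall_inP edgeM _ /edgeM /eqP. Qed.

Lemma matching_edge_eq M e f x :
  is_matching M -> e \in M -> f \in M -> x \in e -> x \in f -> e = f.
Proof.
case/andP=> _ /forall_inP disjM eM fM xe xf; case: (eqVneq e f) => // ef.
have /forall_inP/(_ f fM)/implyP/(_ ef)/pred0P/(_ x) := disjM e eM.
by rewrite /= xe xf.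
Qed.

Lemma sub_delta_meet M X e :
  M \subset delta X -> e \in M -> exists2 x, x \in e & x \in X.
Proof.
move=> /subsetP MX /MX; rewrite inE => /andP[_ /cards1P[x eX]].
have /setIP[xe xX] : x \in e :&: X by rewrite eX set11.
by exists x.
Qed.

Definition partner M x : 'I_n :=
  odflt x [pick y | ([set x; y] \in M) && (y != x)].

Lemma partner_edge M x : partner M x != x -> [set x; partner M x] \in M.
Proof. by rewrite /partner; case: pickP => [y /andP[]|] //=; rewrite eqxx. Qed.

Lemma partner_neq M x y : [set x; y] \in M -> y != x -> partner M x != x.
Proof.
by move=> xyM yx; rewrite /partner; case: pickP => [z /andP[]//|/(_ y)]; rewrite xyM yx.
Qed.

Lemma matching_partnerE M X : is_matching M -> M \subset delta X ->
  M = [set [set x; partner M x] | x in [set x in X | partner M x != x]].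
Proof.
move=> matM MX; apply/setP => e; apply/idP/imsetP => [eM|[x]]; last first.
  by rewrite inE => /andP[_ /partner_edge] + ->.
have [x xe xX] := sub_delta_meet MX eM.
have [y yx Ee] : exists2 y, y != x & e = [set x; y].
  have /eqP/cards2P[a [b [ab Eab]]] := matching_edge matM eM.
  move: xe; rewrite Eab !inE => /orP[]/eqP->; first by exists b => //; rewrite eq_sym.
  by exists a => //; rewrite setUC.
rewrite {}Ee in eM *; have px := partner_neq eM yx.
exists x; first by rewrite inE xX px.
apply: (matching_edge_eq matM eM (partner_edge px) (x := x)); by rewrite !inE eqxx.
Qed.

Lemma card_matchings_sub_delta X :
  #|[set M | is_matching M & M \subset delta X]| <= n ^ #|X|.
Proof.
pose code M : {ffun {x | x \in X} -> 'I_n} := [ffun x => partner M (val x)].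
have -> : n ^ #|X| = #|{ffun {x | x \in X} -> 'I_n}|.
  by rewrite card_ffun card_sig card_ord; apply: congr2 => //; apply: eq_card => x; rewrite !inE.
apply: (@leq_card_in _ _ code) => M1 M2; rewrite !inE => /andP[mat1 sub1] /andP[mat2 sub2] codeE.
have partnerE x : x \in X -> partner M1 x = partner M2 x.
  by move=> xX; move/ffunP/(_ (exist _ x xX)): codeE; rewrite !ffunE.
rewrite (matching_partnerE mat1 sub1) (matching_partnerE mat2 sub2).
have -> : [set x in X | partner M1 x != x] = [set x in X | partner M2 x != x].
  by apply/setP => x; rewrite !inE; case xX: (x \in X); rewrite // partnerE.
by apply: eq_in_imset => x; rewrite inE => /andP[/partnerE ->].
Qed.

Definition cut_sets k M : {set {set 'I_n}} :=
  [set X : {set 'I_n} | (#|X| == k) && (M \subset delta X)].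

Lemma card_cut_sets M : is_matching M -> 2 ^ #|M| <= #|cut_sets #|M| M|.
Proof.
move=> matM; have [d _|no_vertex] := pickP (@predT 'I_n); last first.
  have -> : M = set0.
    apply/setP => e; rewrite inE; apply/negbTE/negP => eM.
    have := matching_edge matM eM; suff -> : e = set0 by rewrite cards0.
    by apply/setP => x; have := no_vertex x.
  by rewrite cards0 card_gt0; apply/set0Pn; exists set0; rewrite inE cards0 sub0set.
pose E := {e | e \in M}.
pose endpoint (e : E) (b : bool) := nth d (enum (val e)) b.
have size_enum (e : E) : size (enum (val e)) = 2.
  by rewrite -cardE (matching_edge matM (valP e)).
have endpoint_mem (e : E) b : endpoint e b \in val e.
  by rewrite -mem_enum mem_nth // size_enum; case: b.
have endpoint_inj (e : E) : injective (endpoint e).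
  by move=> b b' /eqP; rewrite nth_uniq ?enum_uniq ?size_enum; case: b; case: b'.
pose side (g : {ffun E -> bool}) := [set endpoint e (g e) | e : E].
have side_edge g (e : E) : val e :&: side g = [set endpoint e (g e)].
  apply/setP => x; rewrite !inE; apply/andP/eqP => [[xe /imsetP[e' _ xE]]|->].
    suff e'E : e' = e by rewrite xE e'E.
    apply: val_inj; apply: (matching_edge_eq matM (valP e') (valP e) (endpoint_mem e' (g e'))).
    by rewrite -xE.
  by split; [apply: endpoint_mem | apply: imset_f].
have side_inj : injective side.
  move=> g g' sideE; apply/ffunP => e; apply: (endpoint_inj e); apply: set1_inj.
  by rewrite -!side_edge sideE.
have cardE : #|{: E}| = #|M| by rewrite card_sig; apply: eq_card => e; rewrite inE.
rewrite -{1}cardE -card_bool -card_ffun -(card_imset _ side_inj).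
apply/subset_leq_card/subsetP => _ /imsetP[g _ ->]; rewrite inE; apply/andP; split.
  rewrite card_imset ?cardE // => e e' endpointE; apply: val_inj.
  apply: (matching_edge_eq matM (valP e) (valP e') (endpoint_mem e (g e))).
  by rewrite endpointE endpoint_mem.
apply/subsetP => e eM; rewrite inE /is_edge (matching_edge matM eM) /=.
by rewrite (side_edge g (exist _ e eM)) cards1.
Qed.

Definition matchings k : {set {set {set 'I_n}}} :=
  [set M | is_matching M & #|M| == k].

Lemma card_matchings_leq k : #|matchings k| * 2 ^ k <= 'C(n, k) * n ^ k.
Proof.
have cut_matchings : \sum_(M in matchings k) #|cut_sets k M| <= 'C(n, k) * n ^ k.
  under eq_bigr => M _ do rewrite -sum1_card.
  rewrite (exchange_big_dep (fun X : {set 'I_n} => #|X| == k)) /=; last first.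
    by move=> M X _; rewrite inE => /andP[].
  rewrite -[n in 'C(n, _)]card_ord -card_draws -sum_nat_const.
  rewrite [X in _ <= X](eq_bigl (fun X : {set 'I_n} => #|X| == k)); last by move=> X; rewrite inE.
  apply: leq_sum => X /eqP cardX; rewrite sum1_card -cardX.
  apply: leq_trans (card_matchings_sub_delta X); apply/subset_leq_card/subsetP => M.
  by rewrite unfold_in !inE => /andP[/andP[-> _] /andP[_ ->]].
apply: leq_trans cut_matchings; rewrite -sum_nat_const; apply: leq_sum => M.
by rewrite inE => /andP[matM /eqP <-]; apply: card_cut_sets.
Qed.

End Matchings.

Local Open Scope ring_scope.

Lemma exists_le_mean (R : numDomainType) (I : finType) (w : I -> R) (v : I -> nat) :
  (forall i, 0 <= w i) -> \sum_i w i = 1 -> exists i, (v i)%:R <= \sum_i w i * (v i)%:R.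
Proof.
move=> w_ge0 w_sum1; case: (pickP (fun _ : I => true)) => [i0 _|I0]; last first.
  by move: w_sum1; rewrite big_pred0 // => /eqP; rewrite eq_sym oner_eq0.
exists [arg min_(i < i0) v i]; case: arg_minnP => // i _ v_min.
rewrite -[X in X <= _]mul1r -{1}w_sum1 mulr_suml; apply: ler_sum => j _.
by rewrite ler_wpM2l // ler_nat v_min.
Qed.

Section BernoulliSampling.

Variables (R : numDomainType) (I : finType) (p : R).
Hypotheses (p_ge0 : 0 <= p) (p_le1 : p <= 1).

(* The probability of the subset [set x | f x] when each element of I is drawn
   independently with probability p. *)
Definition bernoulli_weight (f : {ffun I -> bool}) : R :=
  \prod_x (if f x then p else 1 - p).

Lemma bernoulli_weight_ge0 f : 0 <= bernoulli_weight f.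
Proof. by apply: prodr_ge0 => x _; case: (f x); rewrite ?subr_ge0. Qed.

Lemma bernoulli_mean_prod (h : I -> bool -> R) :
  \sum_f bernoulli_weight f * \prod_x h x (f x) =
  \prod_x (p * h x true + (1 - p) * h x false).
Proof.
rewrite (eq_bigr (fun x => \sum_b (if b then p else 1 - p) * h x b)); last first.
  by move=> x _; rewrite big_bool.
by rewrite bigA_distr_bigA; apply: eq_bigr => f _; rewrite -big_split.
Qed.

Lemma sum_bernoulli_weight : \sum_f bernoulli_weight f = 1.
Proof.
transitivity (\sum_f bernoulli_weight f * \prod_(x : I) (1 : R)).
  by apply: eq_bigr => f _; rewrite big1_eq mulr1.
by rewrite (bernoulli_mean_prod (fun _ _ => 1)) big1 // => x _; rewrite !mulr1 addrC subrK.
Qed.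

Lemma bernoulli_mean_mem x : \sum_f bernoulli_weight f * (f x)%:R = p.
Proof.
transitivity (\sum_f bernoulli_weight f * \prod_y (if y == x then (f y)%:R else 1)).
  by apply: eq_bigr => f _; rewrite (bigD1 x) //= eqxx big1 ?mulr1 // => y /negbTE ->.
rewrite (bernoulli_mean_prod (fun y b => if y == x then b%:R else 1)) (bigD1 x) //= eqxx big1 => [|y /negbTE ->].
  by rewrite mulr1 mulr1 mulr0 addr0.
by rewrite !mulr1 addrC subrK.
Qed.

Lemma bernoulli_mean_disjoint (B : {set I}) :
  \sum_f bernoulli_weight f * [disjoint B & [set x | f x]]%:R = (1 - p) ^+ #|B|.
Proof.
transitivity (\sum_f bernoulli_weight f * \prod_x (if x \in B then (~~ f x)%:R else 1)).
  apply: eq_bigr => f _; rewrite -big_mkcond /=; case: (boolP [disjoint _ & _]) => [dis|].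
    by rewrite big1 // => x xB; have := disjointFr dis xB; rewrite inE => ->.
  rewrite -setI_eq0 => /set0Pn[x /setIP[xB]]; rewrite inE => fx.
  by rewrite (bigD1 x) //= fx mul0r.
rewrite (bernoulli_mean_prod (fun y b => if y \in B then (~~ b)%:R else 1)).
rewrite -prodr_const [RHS]big_mkcond /=; apply: eq_bigr => x _.
by case: (x \in B); rewrite !mulr1 ?mulr0 ?add0r // addrC subrK.
Qed.

Lemma natr_card_set_in (T : finType) (A : {set T}) (b : pred T) :
  #|[set x in A | b x]|%:R = \sum_(x in A) (b x)%:R :> R.
Proof.
rewrite -sum1dep_card natr_sum big_mkcondr /=.
by apply: eq_bigr => x _; case: (b x).
Qed.

Lemma bernoulli_cover (J : finType) (K : {set I}) (P : {set J}) (A : J -> {set I}) :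
  (forall j, A j \subset K) ->
  exists2 S : {set I}, S \subset K &
    (#|S| + #|[set j in P | [disjoint A j & S]]|)%:R <=
    p * #|K|%:R + \sum_(j in P) (1 - p) ^+ #|A j|.
Proof.
move=> AK; pose S (f : {ffun I -> bool}) := [set x in K | f x].
pose v f := (#|S f| + #|[set j in P | [disjoint A j & S f]]|)%N.
have [f vf] := exists_le_mean v bernoulli_weight_ge0 sum_bernoulli_weight.
exists (S f); first by apply/subsetP => x; rewrite inE => /andP[].
have disjointE j f' : [disjoint A j & S f'] = [disjoint A j & [set x | f' x]].
  rewrite -!setI_eq0; congr (_ == set0); apply/setP => x; rewrite !inE.
  by case xA: (x \in A j); rewrite //= (subsetP (AK j) x xA).
suff <- : \sum_f bernoulli_weight f * (v f)%:R =
          p * #|K|%:R + \sum_(j in P) (1 - p) ^+ #|A j| by [].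
under eq_bigr => f' _ do rewrite natrD !natr_card_set_in mulrDr !mulr_sumr.
rewrite big_split /= exchange_big [X in _ + X]exchange_big /=.
rewrite mulr_natr -sumr_const; congr (_ + _); apply: eq_bigr => x _.
  exact: bernoulli_mean_mem.
by under eq_bigr => f' _ do rewrite disjointE; apply: bernoulli_mean_disjoint.
Qed.

Lemma bernoulli_alteration_cover (J : finType) (K : {set I}) (P : {set J})
    (A : J -> {set I}) (d : nat) :
  (forall j, A j \subset K) -> (0 < d)%N -> {in P, forall j, d <= #|A j|}%N ->
  exists T : {set I}, [/\ T \subset K, {in P, forall j, ~~ [disjoint A j & T]} &
    #|T|%:R <= p * #|K|%:R + #|P|%:R * (1 - p) ^+ d].
Proof.
move=> AK d_gt0 dA; have [S SK S_bound] := bernoulli_cover P AK.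
pose U := [set j in P | [disjoint A j & S]].
pose g j := [pick x in A j].
pose T := S :|: [set x | Some x \in g @: U].
have gA j : j \in P -> exists2 x, g j = Some x & x \in A j.
  rewrite /g; case: pickP => [x xA|A0]; first by exists x.
  by move/dA; rewrite (eq_card0 A0) leqn0 => /eqP d0; rewrite d0 in d_gt0.
exists T; split.
- rewrite subUset SK; apply/subsetP => x; rewrite inE => /imsetP[j].
  by rewrite inE => /andP[/gA[y -> yA] _] [->]; apply: (subsetP (AK j)).
- move=> j jP; case: (boolP [disjoint A j & S]) => [AS|]; last first.
    by apply: contraNN => /disjointWr; apply; apply: subsetUl.
  have [x gjx xA] := gA j jP.
  rewrite -setI_eq0; apply/set0Pn; exists x.
  by rewrite !inE xA /= -gjx imset_f ?orbT // inE jP.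
- have card_picked : (#|[set x | Some x \in g @: U]| <= #|U|)%N.
    apply: leq_trans (leq_imset_card g U); rewrite -(card_imset _ (@Some_inj _)).
    by apply/subset_leq_card/subsetP => y /imsetP[x]; rewrite inE => gx ->.
  apply: le_trans (_ : _ <= (#|S| + #|U|)%:R) _.
    by rewrite ler_nat; apply: leq_trans (leq_card_setU _ _).1 _; rewrite leq_add2l.
  apply: le_trans S_bound _; rewrite lerD2l mulr_natl -sumr_const.
  apply: ler_sum => j jP; apply: ler_wiXn2l; last exact: dA.
    by rewrite subr_ge0.
  by rewrite lerBlDr lerDl.
Qed.

End BernoulliSampling.

Section CoinBias.

Local Open Scope R_scope.

Lemma exp_pow x m : exp x ^ m = exp (INR m * x).
Proof.
elim: m => [|m IH]; first by rewrite Rmult_0_l exp_0.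
by rewrite S_INR /= IH -exp_plus; congr exp; ring.
Qed.

Lemma pow_one_sub_le_exp x m : x <= 1 -> (1 - x) ^ m <= exp (- (INR m * x)).
Proof.
move=> x_le1; rewrite (_ : - _ = INR m * - x); last by ring.
rewrite -exp_pow; apply: pow_incr; have := exp_ineq1_le (- x); lra.
Qed.

Lemma INR_expn a m : INR (a ^ m) = INR a ^ m.
Proof. by rewrite !INRE RpowE natrX. Qed.

Lemma mul_ln_ge0 k n : (1 < n)%N -> 0 <= INR k * ln (INR n).
Proof.
move=> n_gt1; apply: Rmult_le_pos; first exact: pos_INR.
by rewrite -ln_1; apply/Rlt_le/ln_increasing; [lra | apply: (lt_INR 1); apply/ltP].
Qed.

Definition coin_bias (L : R) (m : nat) : R := Rmin 1 (L / INR m).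

Lemma coin_bias_ge0 L m : 0 <= L -> (0 < m)%N -> 0 <= coin_bias L m.
Proof.
move=> L_ge0 /ltP m_gt0; apply: Rmin_glb; first lra.
by apply: Rmult_le_pos => //; apply/Rlt_le/Rinv_0_lt_compat/lt_0_INR.
Qed.

Lemma coin_bias_le1 L m : coin_bias L m <= 1.
Proof. exact: Rmin_l. Qed.

(* For p = L/m, (1 - p)^m <= e^-L turns the second term into C/m; if L > m then p = 1. *)
Lemma coin_bias_bound (C N L : R) (m : nat) :
  0 <= L -> (0 < m)%N -> 0 <= C -> 0 <= N -> N * INR m <= C * exp L ->
  coin_bias L m * C + N * (1 - coin_bias L m) ^ m <= (1 + L) / INR m * C.
Proof.
move=> L_ge0 m_gt0 C_ge0 N_ge0 N_le.
have m_pos : 0 < INR m by apply: lt_0_INR; apply/ltP.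
have eL_pos := exp_pos L.
rewrite /coin_bias; case: (Rle_dec L (INR m)) => [L_le|L_gt].
  have p_le1 : L / INR m <= 1.
    by apply: (Rmult_le_reg_r (INR m)) => //; field_simplify; lra.
  rewrite Rmin_right //.
  have avoid := pow_one_sub_le_exp m p_le1.
  rewrite (_ : - _ = - L) in avoid; last by field; lra.
  have N_avoid : N * exp (- L) <= C / INR m.
    rewrite exp_Ropp (_ : N * _ = N * INR m * (/ exp L * / INR m)); last by field; lra.
    rewrite (_ : C / INR m = C * exp L * (/ exp L * / INR m)); last by field; lra.
    apply: Rmult_le_compat_r => //; apply: Rmult_le_pos; apply/Rlt_le/Rinv_0_lt_compat => //.
  have := Rmult_le_compat_l N _ _ N_ge0 avoid.
  rewrite (_ : (1 + L) / INR m * C = L / INR m * C + C / INR m); last by field; lra.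
  lra.
rewrite Rmin_left; last by apply: (Rmult_le_reg_r (INR m)) => //; field_simplify; lra.
rewrite Rminus_diag pow_i ?Rmult_0_r ?Rplus_0_r; last by apply/ltP.
have : 1 <= (1 + L) / INR m by apply: (Rmult_le_reg_r (INR m)) => //; field_simplify; lra.
nra.
Qed.

Lemma coin_bias_klogn_bound (n k t N C : nat) :
  (1 < n)%N -> (N * 2 ^ k <= C * n ^ k)%N ->
  INR t <= coin_bias (INR k * ln (INR n)) (2 ^ k) * INR C +
           INR N * (1 - coin_bias (INR k * ln (INR n)) (2 ^ k)) ^ (2 ^ k) ->
  INR t <= (1 + INR k * ln (INR n)) * (/ 2) ^ k * INR C.
Proof.
move=> n_gt1 NC /Rle_trans; apply.
have n_pos : 0 < INR n by apply: (lt_INR 0); apply/ltP; apply: ltnW.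
rewrite pow_inv (_ : 2 ^ k = INR (2 ^ k)); last by rewrite INR_expn.
apply: coin_bias_bound; rewrite ?expn_gt0 //; try exact: pos_INR; first exact: mul_ln_ge0.
rewrite -ln_pow // exp_ln; last exact: pow_lt.
by rewrite -INR_expn -!mult_INR; apply/le_INR/leP; rewrite -!mulnE.
Qed.

End CoinBias.

Local Close Scope ring_scope.

(* all_algebra rebinds the key %R to ring_scope; the statement means Stdlib's R_scope. *)
Delimit Scope R_scope with R.

Theorem corollary1 (n k : nat) :
  (2 <= n)%N -> (1 <= k)%N -> (k <= n %/ 2)%N ->
  exists T : {set {set 'I_n}},
    [forall X in T, #|X| == k] /\
    (INR #|T| <= (1 + INR k * ln (INR n)) * (/ 2) ^ k * INR 'C(n, k))%R /\
    (forall M : {set {set 'I_n}}, is_matching M -> #|M| = k ->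
       exists2 X, X \in T & delta X :&: M = M).
Proof.
move=> n_gt1 _ _.
have cut_sets_K M : cut_sets k M \subset [set X : {set 'I_n} | #|X| == k].
  by apply/subsetP => X; rewrite !inE => /andP[].
have cut_sets_ge : {in matchings n k, forall M, 2 ^ k <= #|cut_sets k M|}%N.
  by move=> M; rewrite inE => /andP[matM /eqP <-]; apply: card_cut_sets.
have m_gt0 : (0 < 2 ^ k)%N by rewrite expn_gt0.
have /RleP p_ge0 := coin_bias_ge0 (mul_ln_ge0 k n_gt1) m_gt0.
have /RleP p_le1 := coin_bias_le1 (INR k * ln (INR n)) (2 ^ k).
have [T [TK Tcover Tcard]] :=
  bernoulli_alteration_cover p_ge0 p_le1 cut_sets_K m_gt0 cut_sets_ge.
exists T; split; [|split].
- by apply/forall_inP => X /(subsetP TK); rewrite inE.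
- move/RleP: Tcard; rewrite card_draws card_ord -!INRE -RpowE -RminusE -!RmultE -RplusE.
  by apply: coin_bias_klogn_bound => //; apply: card_matchings_leq.
- move=> M matM cardM; have /Tcover : M \in matchings n k by rewrite inE matM cardM /=.
  rewrite -setI_eq0 => /set0Pn[X /setIP[]]; rewrite inE => /andP[_ Mdelta] XT.
  by exists X => //; apply/setIidPr.
Qed.
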